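(* Let $Z$ be an $n\times n$ positive definite complex matrix with largest eigenvalue $a$ and smallest eigenvalue $b$, and let $E$ be any orthogonal projection ($E=E^*=E^2$). Then $$EZE \le \frac{(a+b)^2}{4ab}\, Z.$$
   Context: $\le$ denotes the Loewner order on Hermitian matrices. *)

(* Complex numbers: an arbitrary numClosedFieldType C
   (e.g. the complex numbers R[i] over a real closed field, or algC). *)
From HB Require Import structures.
From mathcomp Require Import all_boot all_order all_algebra.
Set Implicit Arguments. Unset Strict Implicit. Unset Printing Implicit Defensive.
Import Order.TTheory GRing.Theory Num.Theory.
Local Open Scope ring_scope.
Local Open Scope sesquilinear_scope.

Section Defs.
Variable C : numClosedFieldType.

Definition adjmx n (A : 'M[C]_n) : 'M[C]_n := A ^t*.

Definition hermitianmx n (A : 'M[C]_n) : Prop := adjmx A = A.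

Definition qform n (A : 'M[C]_n) (v : 'rV[C]_n) : C := (v *m A *m v ^t*) 0 0.

Definition psdmx n (A : 'M[C]_n) : Prop :=
  hermitianmx A /\ forall v : 'rV[C]_n, 0 <= qform A v.

Definition pdmx n (A : 'M[C]_n) : Prop :=
  hermitianmx A /\ forall v : 'rV[C]_n, v != 0 -> 0 < qform A v.

Definition loewner_le n (A B : 'M[C]_n) : Prop := psdmx (B - A).

Definition orth_projmx n (E : 'M[C]_n) : Prop := adjmx E = E /\ E *m E = E.

Definition largest_eigenvalue n (A : 'M[C]_n) (a : C) : Prop :=
  eigenvalue A a /\ forall c, eigenvalue A c -> c <= a.
Definition smallest_eigenvalue n (A : 'M[C]_n) (b : C) : Prop :=
  eigenvalue A b /\ forall c, eigenvalue A c -> b <= c.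
End Defs.

(* In an orthonormal eigenbasis of Z, let x and y be the coordinates of v and vE, and
   d_i in [b, a] the eigenvalues.  As E is an orthogonal projection, <x, y> = |y|^2.
   The weighted Cauchy-Schwarz inequality gives |y|^4 <= (sum d|x|^2)(sum |y|^2/d),
   while Kantorovich's inequality, obtained from sum |y_i|^2 (a - d_i)(d_i - b)/d_i >= 0
   and AM-GM, gives 4ab (sum d|y|^2)(sum |y|^2/d) <= (a+b)^2 |y|^4.  Combining the two
   and cancelling sum |y|^2/d yields (vE) Z (vE)^* <= (a+b)^2/(4ab) v Z v^*. *)

From Pilot Require Import Defs.
From mathcomp Require Import all_boot all_order all_algebra.
From mathcomp Require Import ring.
Import Order.TTheory GRing.Theory Num.Theory.
Local Open Scope ring_scope.
Local Open Scope sesquilinear_scope.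

Section Kantorovich.
Context {C : numClosedFieldType} {I : finType}.
Variables (a b : C) (d : I -> C).
Hypotheses (b_gt0 : 0 < b) (le_ba : b <= a) (d_range : forall i, b <= d i <= a).

Let a_gt0 : 0 < a. Proof. exact: lt_le_trans le_ba. Qed.
Let d_gt0 i : 0 < d i. Proof. by case/andP: (d_range i) => /(lt_le_trans b_gt0). Qed.

Lemma kantorovich_linear (c : I -> C) : (forall i, 0 <= c i) ->
  \sum_i d i * c i + a * b * \sum_i c i / d i <= (a + b) * \sum_i c i.
Proof.
move=> c_ge0; rewrite !mulr_sumr -big_split /= ler_sum // => i _.
have [ge_db le_da] := andP (d_range i).
rewrite -subr_ge0.
have -> : (a + b) * c i - (d i * c i + a * b * (c i / d i)) =
          c i * (a - d i) * (d i - b) / d i by field; rewrite gt_eqF ?d_gt0.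
by rewrite divr_ge0 ?mulr_ge0 ?subr_ge0 // ltW.
Qed.

Lemma kantorovich (c : I -> C) : (forall i, 0 <= c i) ->
  4 * a * b * ((\sum_i d i * c i) * (\sum_i c i / d i))
    <= (a + b) ^+ 2 * (\sum_i c i) ^+ 2.
Proof.
move=> c_ge0; set p := \sum_i _ * _; set q := \sum_i _ / _.
have p_ge0 : 0 <= p by rewrite sumr_ge0 // => i _; rewrite mulr_ge0 // ltW.
have q_ge0 : 0 <= q by rewrite sumr_ge0 // => i _; rewrite divr_ge0 // ltW.
have abq_ge0 : 0 <= a * b * q by rewrite !mulr_ge0 // ltW.
have am_gm : 4 * a * b * (p * q) <= (p + a * b * q) ^+ 2.
  rewrite -subr_ge0.
  have -> : (p + a * b * q) ^+ 2 - 4 * a * b * (p * q) = (p - a * b * q) ^+ 2 by ring.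
  by rewrite real_exprn_even_ge0 // realB ?ger0_real.
rewrite (le_trans am_gm) // -exprMn lerXn2r ?nnegrE ?addr_ge0 //.
  by rewrite mulr_ge0 ?addr_ge0 ?sumr_ge0 // ltW.
exact: kantorovich_linear.
Qed.

End Kantorovich.

Lemma weighted_CauchySchwarz (C : numClosedFieldType) n (d x y : 'I_n -> C) :
    (forall i, 0 < d i) ->
  `|\sum_i x i * (y i)^*| ^+ 2
    <= (\sum_i d i * `|x i| ^+ 2) * (\sum_i `|y i| ^+ 2 / d i).
Proof.
move=> d_gt0; set s := fun i => sqrtC (d i).
have s_real i : (s i)^* = s i by rewrite conj_Creal // ger0_real // sqrtC_ge0 ltW.
have s_neq0 i : s i != 0 by rewrite sqrtC_eq0 gt_eqF.
have sqr_s i : s i * s i = d i by rewrite -expr2 sqrtCK.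
have dotE (u v : 'I_n -> C) :
    dotmx (\row_i u i) (\row_i v i) = \sum_i u i * (v i)^*.
  by rewrite dotmxE mxE; apply: eq_bigr => i _; rewrite !mxE.
have [+ _] := CauchySchwarz (@dotmx C n) (\row_i (x i * s i)) (\row_i (y i / s i)).
rewrite /= !dotE.
congr (`|_| ^+ 2 <= _ * _); apply: eq_bigr => i _.
- by rewrite rmorphM fmorphV /= s_real mulrACA divff ?mulr1.
- by rewrite rmorphM /= s_real mulrACA sqr_s normCK mulrC.
- by rewrite rmorphM fmorphV /= s_real mulrACA -invfM sqr_s normCK.
Qed.

Lemma kantorovich_proj (C : numClosedFieldType) n (a b : C) (d x y : 'I_n -> C) :
    0 < b -> b <= a -> (forall i, b <= d i <= a) ->
    \sum_i x i * (y i)^* = \sum_i `|y i| ^+ 2 ->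
  \sum_i d i * `|y i| ^+ 2 <= (a + b) ^+ 2 / (4 * a * b) * \sum_i d i * `|x i| ^+ 2.
Proof.
move=> b_gt0 le_ba d_range xy.
have a_gt0 : 0 < a := lt_le_trans b_gt0 le_ba.
have d_gt0 i : 0 < d i by case/andP: (d_range i) => /(lt_le_trans b_gt0).
set s := \sum_i _ ^+ 2 in xy; set p := \sum_i d i * _; set r := \sum_i d i * _.
set q := \sum_i `|y i| ^+ 2 / d i.
have c_ge0 i : 0 <= `|y i| ^+ 2 by rewrite exprn_ge0.
have r_ge0 : 0 <= r by rewrite sumr_ge0 // => i _; rewrite mulr_ge0 ?exprn_ge0 // ltW.
have cauchy_schwarz : s ^+ 2 <= r * q.
  by rewrite -[s]ger0_norm ?sumr_ge0 // -xy weighted_CauchySchwarz.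
have kant : 4 * a * b * (p * q) <= (a + b) ^+ 2 * s ^+ 2 by apply: kantorovich.
have q_ge0 : 0 <= q by rewrite sumr_ge0 // => i _; rewrite divr_ge0 // ltW.
have [q0|q_neq0] := eqVneq q 0.
  have y0 i : `|y i| ^+ 2 = 0.
    have q_terms_ge0 j : true -> 0 <= `|y j| ^+ 2 / d j by rewrite divr_ge0 // ltW.
    have /eqP := psumr_eq0P q_terms_ge0 q0 (i := i) isT.
    by rewrite mulf_eq0 invr_eq0 (gt_eqF (d_gt0 i)) orbF => /eqP.
  rewrite /p big1 => [|i _]; last by rewrite y0 mulr0.
  apply: mulr_ge0 r_ge0; apply: divr_ge0; first by rewrite exprn_ge0 // addr_ge0 // ltW.
  by rewrite !mulr_ge0 // ltW.
have abq_gt0 : 0 < 4 * a * b * q by rewrite !mulr_gt0 ?ltr0n // lt_def q_neq0.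
rewrite -(ler_pM2l abq_gt0).
have -> : 4 * a * b * q * p = 4 * a * b * (p * q) by ring.
have -> : 4 * a * b * q * ((a + b) ^+ 2 / (4 * a * b) * r) = (a + b) ^+ 2 * (r * q).
  by field; rewrite !gt_eqF //.
by rewrite (le_trans kant) // ler_wpM2l // exprn_ge0 // addr_ge0 // ltW.
Qed.

Section SpectralFacts.
Context {C : numClosedFieldType} {n : nat}.
Implicit Types (A M P : 'M[C]_n) (u v w : 'rV[C]_n).

Lemma normalmx_spectralE A : A \is normalmx ->
  A = (spectralmx A)^t* *m diag_mx (spectral_diag A) *m spectralmx A.
Proof. by move/orthomx_spectralP; rewrite invmx_unitary ?spectral_unitarymx. Qed.

Lemma eigenvalue_spectral_diag A i : A \is normalmx ->
  eigenvalue A (spectral_diag A 0 i).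
Proof.
move=> /normalmx_spectralE A_spectral.
have P_unitary := spectral_unitarymx A.
set P := spectralmx A in A_spectral P_unitary *.
apply/eigenvalueP; exists (row i P).
  rewrite [X in _ *m X]A_spectral !mulmxA -row_mul (unitarymxP P_unitary).
  by rewrite row1 -rowE row_diag_mx -scalemxAl -rowE.
apply/eqP => row0; have /row_unitarymxP/(_ i i) := P_unitary.
by rewrite row0 linear0l eqxx => /eqP; rewrite eq_sym oner_eq0.
Qed.

Lemma pdmx_eigenvalue_gt0 {A c} : pdmx A -> eigenvalue A c -> 0 < c.
Proof.
move=> [_ A_pd] /eigenvalueP[v vA v_neq0].
have := A_pd v v_neq0; rewrite /qform vA -scalemxAl mxE -dotmxE.
by rewrite pmulr_lgt0 // dnorm_gt0.
Qed.

Lemma mulmx_adj00 u w : (u *m w^t*) 0 0 = \sum_i u 0 i * (w 0 i)^*.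
Proof. by rewrite mxE; apply: eq_bigr => i _; rewrite !mxE. Qed.

Lemma qform_diag P (D : 'rV[C]_n) v :
  qform (P^t* *m diag_mx D *m P) v = \sum_i D 0 i * `|(v *m P^t*) 0 i| ^+ 2.
Proof.
rewrite /qform; have -> : v *m (P^t* *m diag_mx D *m P) *m v^t* =
          (v *m P^t*) *m diag_mx D *m (v *m P^t*)^t*.
  by rewrite trmx_mul map_mxM trmxCK !mulmxA.
rewrite mulmx_adj00; apply: eq_bigr => i _.
by rewrite mul_mx_diag [in LHS]mxE mulrAC -normCK mulrC.
Qed.

Lemma qform_scale_sub (k : C) A M v :
  qform (k *: A - M) v = k * qform A v - qform M v.
Proof. by rewrite /qform mulmxBr mulmxBl -scalemxAr -scalemxAl !mxE. Qed.

Lemma qform_conj A M v : qform (M *m A *m M^t*) v = qform A (v *m M).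
Proof. by rewrite /qform trmx_mul map_mxM !mulmxA. Qed.

Lemma unitarymx_dot P u w : P \is unitarymx -> (u *m P) *m (w *m P)^t* = u *m w^t*.
Proof. by move=> P_unitary; rewrite trmx_mul map_mxM mulmxA mulmxtVK. Qed.

Lemma orth_projmx_dot (E : 'M[C]_n) v : orth_projmx E ->
  v *m (v *m E)^t* = (v *m E) *m (v *m E)^t*.
Proof.
by move=> [E_adj EE]; rewrite trmx_mul map_mxM [E^t*]E_adj !mulmxA -(mulmxA v E E) EE.
Qed.

End SpectralFacts.

Theorem corollary1p6 (C : numClosedFieldType) (n : nat) (Z E : 'M[C]_n) (a b : C) :
  pdmx Z -> largest_eigenvalue Z a -> smallest_eigenvalue Z b ->
  orth_projmx E ->
  loewner_le (E *m Z *m E) (((a + b) ^+ 2 / (4 * a * b)) *: Z).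
Proof.
move=> Z_pd [a_eig a_max] [b_eig b_min] E_proj.
have Z_adj : Z^t* = Z by case: Z_pd.
have E_adj : E^t* = E by case: E_proj.
have Z_normal : Z \is normalmx by apply/normalmxP; rewrite Z_adj.
have b_gt0 : 0 < b := pdmx_eigenvalue_gt0 Z_pd b_eig.
have D_range i : b <= spectral_diag Z 0 i <= a.
  by rewrite b_min ?a_max ?eigenvalue_spectral_diag.
set k := _ / _.
have a_gt0 : 0 < a := lt_le_trans b_gt0 (a_max b b_eig).
have k_real : k^* = k.
  by rewrite conj_Creal // gtr0_real // divr_gt0 ?exprn_gt0 ?addr_gt0 ?mulr_gt0 ?ltr0n.
split.
  rewrite /Defs.hermitianmx /adjmx linearB linearZ /= !trmx_mul map_mxB map_mxZ !map_mxM.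
  by rewrite /= k_real Z_adj E_adj mulmxA.
move=> v; rewrite qform_scale_sub -{2}E_adj qform_conj subr_ge0.
rewrite (normalmx_spectralE Z Z_normal) !qform_diag.
have P_adj_unitary : (spectralmx Z)^t* \is unitarymx.
  by rewrite trmxC_unitary spectral_unitarymx.
apply: kantorovich_proj => //; first exact: a_max.
under [in RHS]eq_bigr do rewrite normCK.
by rewrite -!mulmx_adj00 !(unitarymx_dot ((spectralmx Z)^t*)) // orth_projmx_dot.
Qed.
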